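(* Let $\bar F:\mathbb{R}^n\times\mathbb{R}^q\times\mathbb{R}_{>0}\to\mathbb{R}^n$ and consider $x_{k+1}=\bar F(x_k,e_k,T_k)$. Suppose that: (i) there exists $\mathring T>0$ such that $\bar F(0,0,T)=0$ for all $T\in(0,\mathring T)$; (ii) there exists $\hat T>0$ such that for every $\epsilon>0$ there exists $\delta=\delta(\epsilon)>0$ such that $|\bar F(x,e,T)|<\epsilon$ whenever $|x|\le\delta$, $|e|\le\delta$ and $T\in(0,\hat T)$; (iii) for every $M,E\ge0$ there exist $C=C(M,E)>0$ and $\check T=\check T(M,E)>0$, with $C(\cdot,\cdot)$ nondecreasing in each variable and $\check T(\cdot,\cdot)$ nonincreasing in each variable, such that $|\bar F(x,e,T)|\le C$ for all $|x|<M$, $|e|<E$ and $T\in(0,\check T)$; (iv) there exist $N>0$, constants $K_1,K_2,K_3\ge1$, the functions $\alpha_i(s):=K_is^N$ ($i=1,2,3$), and $\rho\in\mathcal{K}$ such that for every $M,E\ge0$ there exist $\tilde T=\tilde T(M,E)>0$ and $V=V_{M,E}:\mathbb{R}^n\to\mathbb{R}_{\ge0}\cup\{\infty\}$ with $\alpha_1(|x|)\le V(x)$ for all $x\in\mathbb{R}^n$, $V(x)\le\alpha_2(|x|)$ for all $|x|\le M$, and $V(\bar F(x,e,T))-V(x)\le -T\alpha_3(|x|)$ for all $x,e$ with $\rho(|e|)\le|x|\le M$, $|e|\le E$ and all $T\in(0,\tilde T)$. Then the system $x_{k+1}=\bar F(x_k,e_k,T_k)$ is SE-ISS-VSR.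
   Context: For $T>0$, $\Phi(T)$ denotes the set of all sequences $\{T_i\}_{i=0}^\infty$ with $T_i\in(0,T)$ for all $i$; $\|\{e_i\}\|:=\sup_{i\ge0}|e_i|$. Conventions: $\sum_{i=0}^{-1}T_i=0$ and $\gamma(\sup_{0\le i\le -1}|e_i|)=0$. $\mathcal{K}$: continuous strictly increasing functions $\mathbb{R}_{\ge0}\to\mathbb{R}_{\ge0}$ vanishing at $0$; $\mathcal{K}_\infty$: unbounded members of $\mathcal{K}$. SE-ISS-VSR: there exist $K\ge1$, $\lambda>0$, $\gamma\in\mathcal{K}_\infty$ such that for all $M,E\ge0$ there exists $T^\star=T^\star(M,E)>0$ such that for all $k\in\mathbb{N}_0$, $\{T_i\}\in\Phi(T^\star)$, $|x_0|\le M$ and $\|\{e_i\}\|\le E$, solutions satisfy $|x_k|\le K|x_0|\exp(-\lambda\sum_{i=0}^{k-1}T_i)+\gamma(\sup_{0\le i\le k-1}|e_i|)$. *)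

From HB Require Import structures.
From mathcomp Require Import all_boot all_order all_algebra.
From mathcomp Require Import all_classical all_reals all_analysis.
Set Implicit Arguments. Unset Strict Implicit. Unset Printing Implicit Defensive.
Import Order.TTheory GRing.Theory Num.Theory.
Import numFieldNormedType.Exports.
Local Open Scope ring_scope.
Local Open Scope classical_set_scope.

Definition vnorm (R : realType) (n : nat) (x : 'cV[R]_n) : R :=
  Num.sqrt (\sum_(i < n) (x i ord0) ^+ 2).

Definition class_K (R : realType) (f : R -> R) : Prop :=
  [/\ {within [set x : R | 0 <= x], continuous f},
      (forall x y : R, 0 <= x -> x < y -> f x < f y),
      (forall x : R, 0 <= x -> 0 <= f x) & f 0 = 0].

Definition class_Kinf (R : realType) (f : R -> R) : Prop :=
  class_K f /\ (forall M : R, exists s : R, 0 <= s /\ M < f s).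

Fixpoint traj (R : realType) (n q : nat)
  (F : 'cV[R]_n -> 'cV[R]_q -> R -> 'cV[R]_n)
  (x0 : 'cV[R]_n) (e : nat -> 'cV[R]_q) (Ts : nat -> R) (k : nat) : 'cV[R]_n :=
  match k with
  | 0 => x0
  | k'.+1 => F (traj F x0 e Ts k') (e k') (Ts k')
  end.

Definition in_Phi (R : realType) (T : R) (Ts : nat -> R) : Prop :=
  forall i, 0 < Ts i < T.

(* SE-ISS-VSR; sup over the empty index set is 0, and gamma 0 = 0 *)
Definition SE_ISS_VSR (R : realType) (n q : nat)
  (F : 'cV[R]_n -> 'cV[R]_q -> R -> 'cV[R]_n) : Prop :=
  exists (K lam : R) (gamma : R -> R),
    1 <= K /\ 0 < lam /\ class_Kinf gamma /\
    forall M E : R, 0 <= M -> 0 <= E ->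
      exists Tstar : R, 0 < Tstar /\
        forall (k : nat) (Ts : nat -> R) (x0 : 'cV[R]_n) (e : nat -> 'cV[R]_q),
          in_Phi Tstar Ts -> vnorm x0 <= M -> (forall i, vnorm (e i) <= E) ->
          vnorm (traj F x0 e Ts k) <=
            K * vnorm x0 * expR (- lam * \sum_(i < k) Ts i)
            + gamma (\big[Num.max/0]_(i < k) vnorm (e i)).

From HB Require Import structures.
From mathcomp Require Import all_boot all_order all_algebra.
From mathcomp Require Import all_classical all_reals all_analysis.
From mathcomp Require Import lra ring.
Import Order.TTheory GRing.Theory Num.Theory.
Import numFieldNormedType.Exports.
Set Implicit Arguments. Unset Strict Implicit. Unset Printing Implicit Defensive.
Local Open Scope ring_scope.
Local Open Scope classical_set_scope.

(* Away from the ball |x| < rho(|e|) the Lyapunov function of (iv) contracts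
   by the factor 1 - T K3/K2 >= exp(-T K3/K2) in each step.  Inside that ball
   no decrease is available, but by (ii) and (iii) one step lands in the ball
   of radius g(|e|), where g is a continuous strictly increasing majorant of
   these one-step outputs with g(s) >= s.  By induction,
     V(x_k) <= K2 max(|x_0| exp(-lambda sum_i T_i), g(max_i |e_i|))^N
   with lambda = K3/(K2 N), and the sandwich K1 |x|^N <= V(x) <= K2 |x|^N
   turns this into the estimate with K = (K2/min(K1,K2))^(1/N), gamma = K g.
   The function V is taken at the level K (M + g(E)), which the estimate
   itself shows the trajectory never leaves. *)

Lemma vnorm_ge0 (R : realType) (m : nat) (v : 'cV[R]_m) : 0 <= vnorm v.
Proof. exact: sqrtr_ge0. Qed.

Lemma class_K_le (R : realType) (f : R -> R) : class_K f ->
  forall x y, 0 <= x -> x <= y -> f x <= f y.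
Proof.
case=> _ f_incr _ _ x y x0; rewrite le_eqVlt => /predU1P [-> //|xy].
exact/ltW/f_incr.
Qed.

Lemma class_K_small (R : realType) (f : R -> R) : class_K f ->
  forall eps, 0 < eps -> exists2 d, 0 < d & forall t, 0 <= t <= d -> f t <= eps.
Proof.
case=> f_cont _ _ f0 eps eps0.
have /cvgrPdist_le /(_ eps eps0) /nbhs_ballP [d /= d0 fd] :=
  (subspace_continuousP _ _).1 f_cont 0 (lexx 0).
exists (d / 2) => [|t /andP [t0 td]]; first by rewrite divr_gt0.
have : `|f 0 - f t| <= eps.
  by apply: (fd t) => //; rewrite /ball /= sub0r normrN ger0_norm //; lra.
by rewrite f0 sub0r normrN; apply: le_trans; exact: ler_norm.
Qed.

Lemma class_Kinf_scale (R : realType) (g : R -> R) (c : R) : 0 < c ->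
    continuous g -> {homo g : x y / x < y} -> g 0 = 0 -> (forall s, s <= g s) ->
  class_Kinf (fun s => c * g s).
Proof.
move=> c0 g_cont g_incr g0 g_ge; split; first split.
- by apply: continuous_subspaceT => x; apply: cvgM; [exact: cvg_cst | exact: g_cont].
- by move=> x y _ xy; rewrite ltr_pM2l // g_incr.
- by move=> x x0; apply: mulr_ge0; [exact: ltW | exact: le_trans x0 (g_ge x)].
- by rewrite g0 mulr0.
move=> M; exists (`|M| / c + 1); split; first by rewrite addr_ge0 // divr_ge0 // ltW.
have : c * (`|M| / c + 1) <= c * g (`|M| / c + 1) by rewrite ler_pM2l.
rewrite mulrDr mulrCA divff ?gt_eqF // mulr1.
by have := ler_norm M; lra.
Qed.

Lemma powR_le_mul_root (R : realType) (N a b z w : R) :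
    0 < N -> 0 < a -> 0 <= b -> 0 <= z -> 0 <= w ->
  a * z `^ N <= b * w `^ N -> z <= (b / a) `^ N^-1 * w.
Proof.
move=> N0 a0 b0 z0 w0 le_zw; rewrite leNgt; apply/negP => lt_wz.
have ba0 : 0 <= b / a by rewrite divr_ge0 // ltW.
have := gt0_ltr_powR N0 _ _ lt_wz; rewrite !nnegrE mulr_ge0 ?powR_ge0 //.
rewrite powRM ?powR_ge0 // -powRrM mulVf ?gt_eqF // powRr1 // => /(_ isT z0).
rewrite -(ltr_pM2l a0) mulrA mulrCA divff ?gt_eqF // mulr1.
by rewrite ltNge le_zw.
Qed.

Lemma continuous_at_lipschitz (R : realType) (f : R -> R) (a d L : R) : 0 < d ->
  (forall t, `|a - t| < d -> `|f a - f t| <= L * `|a - t|) -> {for a, continuous f}.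
Proof.
move=> d0 fL; apply/cvgrPdist_le => eps eps0.
have L1 : 0 < `|L| + 1 by rewrite ltr_pwDr.
have w0 : 0 < eps / (`|L| + 1) by rewrite divr_gt0.
apply/nbhs_ballP; exists (Num.min d (eps / (`|L| + 1))) => [|t]; first by rewrite /= lt_min d0.
rewrite /ball /= lt_min => /andP [td te]; apply: le_trans (fL t td) _.
have Lw : `|L| * (eps / (`|L| + 1)) <= eps.
  by rewrite mulrA ler_pdivrMr // mulrC ler_wpM2l ?lerDl // ltW.
have := ler_norm L; have := normr_ge0 L; have := normr_ge0 (a - t).
move: (eps / _) te Lw => w; nra.
Qed.

Section Majorant.
Variables (R : realType) (P : R -> R -> Prop).
Hypothesis P_ge0 : forall r y, P r y -> 0 < r /\ 0 <= y.
Hypothesis P_bounded : forall s, exists B, forall r y, r <= s -> P r y -> y <= B.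
Hypothesis P_small : forall eps : R, 0 < eps ->
  exists2 d : R, 0 < d & forall r y, r <= d -> P r y -> y <= eps.

(* The weight 2 - r / s is at least 1 for r <= s, vanishes at r = 2 s and
   increases with s: the supremum dominates every y, is nondecreasing, and is
   Lipschitz away from 0 because only bounded y enter it. *)
Definition ramp_set s : set R :=
  [set z | exists r y, [/\ P r y, r <= 2 * s & z = y * (2 - r / s)]].

Definition ramp s := sup (ramp_set s).

Definition majorant s := ramp s + s.

Lemma ramp_weight (r s : R) : 0 < r -> r <= 2 * s -> 0 < s /\ 0 <= r / s <= 2.
Proof.
move=> r0 rs; have s0 : 0 < s by lra.
split=> //; apply/andP; split; first by rewrite divr_ge0 ?ltW.
by rewrite ler_pdivrMr // mulrC.
Qed.

Lemma weighted_le (y u b : R) : 0 <= y -> y <= b -> 0 <= u <= 2 -> y * (2 - u) <= 2 * b.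
Proof. by move=> y0 yb /andP [u0 u2]; rewrite mulrC ler_pM //; lra. Qed.

Lemma ramp_set_ge0 s z : ramp_set s z -> 0 <= z.
Proof.
move=> [r [y [/P_ge0 [r0 y0] rs ->]]].
have [_ /andP [_ w2]] := ramp_weight r0 rs.
by rewrite mulr_ge0 // subr_ge0.
Qed.

Lemma ramp_set_ubound s : has_ubound (ramp_set s).
Proof.
have [B PB] := P_bounded (2 * s).
exists (2 * Num.max B 0) => _ [r [y [Pry rs ->]]].
have [r0 y0] := P_ge0 Pry; have [_ w02] := ramp_weight r0 rs.
by apply: weighted_le; rewrite // le_max (PB r y rs Pry).
Qed.

Lemma ramp_set_le_ramp s z : ramp_set s z -> z <= ramp s.
Proof. exact: ub_le_sup (ramp_set_ubound s) z. Qed.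

Lemma ramp_le s b : 0 <= b -> (forall z, ramp_set s z -> z <= b) -> ramp s <= b.
Proof.
rewrite /ramp => b0 Wb; have [->|/set0P Wn0] := eqVneq (ramp_set s) set0.
  by rewrite sup0.
exact: ge_sup.
Qed.

Lemma ramp_ge0 s : 0 <= ramp s.
Proof.
rewrite /ramp; have [->|/set0P [z Wz]] := eqVneq (ramp_set s) set0.
  by rewrite sup0.
exact: le_trans (ramp_set_ge0 Wz) (ramp_set_le_ramp Wz).
Qed.

Lemma ramp_nonpos s : s <= 0 -> ramp s = 0.
Proof.
move=> s0; rewrite /ramp (_ : ramp_set s = set0) ?sup0 //.
by apply/seteqP; split=> // z [r [y [/P_ge0 [r0 _] rs _]]]; lra.
Qed.

Lemma le_ramp : {homo ramp : s s' / s <= s'}.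
Proof.
move=> s s' ss'; apply: ramp_le (ramp_ge0 s') _ => _ [r [y [Pry rs ->]]].
have [r0 y0] := P_ge0 Pry; have [s0 _] := ramp_weight r0 rs.
have s'0 : 0 < s' by lra.
apply: le_trans (ramp_set_le_ramp (_ : ramp_set s' (y * (2 - r / s')))); last first.
  by exists r, y; split=> //; lra.
rewrite ler_wpM2l // lerD2l lerN2; apply: ler_wpM2l; first exact: ltW.
by rewrite lef_pV2 ?posrE.
Qed.

Lemma P_le_ramp r y s : P r y -> r <= s -> y <= ramp s.
Proof.
move=> Pry rs; have [r0 y0] := P_ge0 Pry; have s0 : 0 < s by lra.
apply: le_trans (ramp_set_le_ramp (_ : ramp_set s (y * (2 - r / s)))); last first.
  by exists r, y; split=> //; lra.
have : r / s <= 1 by rewrite ler_pdivrMr // mul1r.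
by move=> u1; rewrite -{1}(mulr1 y); apply: ler_wpM2l => //; lra.
Qed.

Lemma ramp_small eps : 0 < eps -> exists2 d, 0 < d & forall s, s <= d -> ramp s <= eps.
Proof.
move=> eps0; have [|d d0 Pd] := P_small (_ : 0 < eps / 2); first lra.
exists (d / 2) => [|s sd]; first lra.
apply: ramp_le => [|_ [r [y [Pry rs ->]]]]; first exact: ltW.
have [r0 y0] := P_ge0 Pry; have [_ w02] := ramp_weight r0 rs.
rewrite (_ : eps = 2 * (eps / 2)); last by field.
by apply: weighted_le => //; apply: Pd Pry; lra.
Qed.

Lemma ramp_shift s s' B : 0 < s' -> s' <= s -> 0 <= B ->
    (forall r y, r <= 2 * s -> P r y -> y <= B) ->
  ramp s <= ramp s' + 2 * B / s' * (s - s').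
Proof.
move=> s'0 s's B0 PB; have s0 : 0 < s by lra.
rewrite mulrAC.
apply: ramp_le => [|_ [r [y [Pry rs ->]]]].
  by rewrite addr_ge0 ?ramp_ge0 // divr_ge0 ?(ltW s'0) // !mulr_ge0 // subr_ge0.
have [r0 y0] := P_ge0 Pry; have yB := PB r y rs Pry.
have shift : 2 * y * (s - s') / s' <= 2 * B * (s - s') / s'.
  apply: ler_wpM2r; first by rewrite invr_ge0 ltW.
  apply: ler_wpM2r; first by rewrite subr_ge0.
  exact: ler_wpM2l.
suff : y * (2 - r / s) <= ramp s' + 2 * y * (s - s') / s' by lra.
have [rs'|s'r] := lerP r (2 * s').
  have : y * (2 - r / s') <= ramp s' by apply: ramp_set_le_ramp; exists r, y.
  have -> : y * (2 - r / s) = y * (2 - r / s') + (y * (s - s') / s') * (r / s).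
    by field; rewrite !gt_eqF.
  have : (y * (s - s') / s') * (r / s) <= (y * (s - s') / s') * 2.
    have [_ /andP [_ w2]] := ramp_weight r0 rs.
    by apply: ler_wpM2l => //; rewrite divr_ge0 ?mulr_ge0 ?subr_ge0 // ltW.
  rewrite (_ : 2 * y * (s - s') / s' = (y * (s - s') / s') * 2); last by field; rewrite gt_eqF.
  lra.
have : y * (2 - r / s) <= 2 * y * (s - s') / s.
  rewrite (_ : 2 * y * (s - s') / s = y * (2 - 2 * s' / s)); last by field; rewrite gt_eqF.
  apply: ler_wpM2l => //; rewrite lerD2l lerN2.
  by apply: ler_wpM2r; rewrite ?invr_ge0 ltW.
have : 2 * y * (s - s') / s <= 2 * y * (s - s') / s'.
  by apply: ler_wpM2l; rewrite ?mulr_ge0 ?subr_ge0 // lef_pV2 ?posrE.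
have := ramp_ge0 s'; lra.
Qed.

Lemma ramp_continuous : continuous ramp.
Proof.
move=> a; have [a0|a0|->] := ltrgtP a 0.
- apply: (@continuous_at_lipschitz _ _ _ (- a) 0) => [|t]; first lra.
  rewrite ltr_distlC => /andP [_ ta].
  by rewrite !ramp_nonpos ?subrr ?normr0 ?mul0r //; lra.
- have [B PB] := P_bounded (3 * a); pose m := Num.max B 0.
  have m0 : 0 <= m by rewrite le_max lexx orbT.
  have Pm s : s <= 3 * a / 2 -> forall r y, r <= 2 * s -> P r y -> y <= m.
    by move=> sa r y rs Pry; rewrite le_max (PB r y) //; lra.
  have mL s : a / 2 <= s -> 2 * m / s <= 4 * m / a.
    move=> as0; have s0 : 0 < s by lra.
    rewrite (_ : 2 * m / s = 4 * m / a * (a / (2 * s))); last by field; rewrite !gt_eqF.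
    rewrite ler_piMr ?divr_ge0 ?mulr_ge0 ?(ltW a0) //.
    by rewrite ler_pdivrMr ?mul1r; lra.
  apply: (@continuous_at_lipschitz _ _ _ (a / 2) (4 * m / a)) => [|t]; first lra.
  rewrite ltr_distlC => /andP [lt_t lt_t'].
  have [le_at|le_ta] := lerP a t.
  + have ra := le_ramp le_at; have ta0 : 0 <= t - a by rewrite subr_ge0.
    have := ramp_shift a0 le_at m0 (Pm t ltac:(lra)).
    have := ler_wpM2r ta0 (mL a ltac:(lra)).
    rewrite distrC ger0_norm ?subr_ge0 //; lra.
  + have ra := le_ramp (ltW le_ta); have at0 : 0 <= a - t by rewrite subr_ge0 ltW.
    have t0 : 0 < t by lra.
    have := ramp_shift t0 (ltW le_ta) m0 (Pm a ltac:(lra)).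
    have := ler_wpM2r at0 (mL t ltac:(lra)).
    rewrite ger0_norm ?subr_ge0 //; lra.
- apply/cvgrPdist_le => eps eps0; have [d d0 small] := ramp_small eps0.
  apply/nbhs_ballP; exists d => // t; rewrite /ball /= sub0r normrN => td.
  rewrite ramp_nonpos // sub0r normrN ger0_norm ?ramp_ge0 //.
  exact/small/(le_trans (ler_norm t))/ltW.
Qed.

Lemma majorant_spec :
  [/\ continuous majorant, {homo majorant : s s' / s < s'}, majorant 0 = 0,
      (forall s, s <= majorant s) &
      (forall r y s, P r y -> r <= s -> y <= majorant s)].
Proof.
split.
- by move=> s; apply: cvgD; [exact: ramp_continuous | exact: cvg_id].
- by move=> s s' ss'; rewrite ler_ltD // le_ramp // ltW.
- by rewrite /majorant ramp_nonpos // addr0.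
- by move=> s; rewrite lerDr ramp_ge0.
- move=> r y s Pry rs; have [r0 _] := P_ge0 Pry.
  by rewrite (le_trans (P_le_ramp Pry rs)) // lerDl; lra.
Qed.

End Majorant.

Section Stability.
Variables (R : realType) (n q : nat) (F : 'cV[R]_n -> 'cV[R]_q -> R -> 'cV[R]_n).
Variables (Th : R) (C Tc : R -> R -> R) (N K1 K2 K3 : R) (rho : R -> R).

Hypothesis Th_gt0 : 0 < Th.
Hypothesis F_small : forall eps : R, 0 < eps ->
  exists delta : R, 0 < delta /\
    forall (x : 'cV[R]_n) (e : 'cV[R]_q) (T : R),
      vnorm x <= delta -> vnorm e <= delta -> 0 < T < Th -> vnorm (F x e T) < eps.
Hypothesis C_Tc_gt0 : forall M E : R, 0 <= M -> 0 <= E -> 0 < C M E /\ 0 < Tc M E.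
Hypothesis C_Tc_monoM : forall M M' E : R, 0 <= M -> M <= M' -> 0 <= E ->
  C M E <= C M' E /\ Tc M' E <= Tc M E.
Hypothesis C_Tc_monoE : forall M E E' : R, 0 <= M -> 0 <= E -> E <= E' ->
  C M E <= C M E' /\ Tc M E' <= Tc M E.
Hypothesis F_bounded : forall M E : R, 0 <= M -> 0 <= E ->
  forall (x : 'cV[R]_n) (e : 'cV[R]_q) (T : R),
    vnorm x < M -> vnorm e < E -> 0 < T < Tc M E -> vnorm (F x e T) <= C M E.
Hypotheses (N_gt0 : 0 < N) (K1_ge1 : 1 <= K1) (K2_ge1 : 1 <= K2) (K3_ge1 : 1 <= K3).
Hypothesis rho_K : class_K rho.

Let rho_ge0 r : 0 <= r -> 0 <= rho r.
Proof. by case: rho_K => _ _ + _; apply. Qed.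

Let le_rho r r' : 0 <= r -> r <= r' -> rho r <= rho r'.
Proof. exact: class_K_le. Qed.

Definition step_bound r := Num.min Th (Tc (rho r) (r + 1)).

Lemma step_bound_gt0 r : 0 <= r -> 0 < step_bound r.
Proof.
move=> r0; rewrite lt_min Th_gt0 (C_Tc_gt0 (rho_ge0 r0) _).2 //; lra.
Qed.

Lemma step_bound_le r r' : 0 <= r -> r <= r' -> step_bound r' <= step_bound r.
Proof.
move=> r0 rr'; rewrite le_min ge_min lexx /= ge_min; apply/orP; right.
have rr'1 : r + 1 <= r' + 1 by lra.
apply: le_trans (C_Tc_monoM (rho_ge0 r0) (le_rho r0 rr') _).2 _; first lra.
by apply: (C_Tc_monoE (rho_ge0 r0) _ rr'1).2; lra.
Qed.

Definition small_state_output r y := exists x e T,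
  [/\ vnorm e = r, vnorm x < rho r, 0 < T < step_bound r & y = vnorm (F x e T)].

Lemma small_state_output_ge0 r y : small_state_output r y -> 0 < r /\ 0 <= y.
Proof.
move=> [x [e [T [<- xr _ ->]]]]; split; last exact: vnorm_ge0.
rewrite lt_neqAle vnorm_ge0 andbT; apply: contraTneq xr => <-.
by case: rho_K => _ _ _ ->; rewrite -leNgt vnorm_ge0.
Qed.

Lemma small_state_output_bounded s :
  exists B, forall r y, r <= s -> small_state_output r y -> y <= B.
Proof.
pose s' := Num.max s 0; exists (C (rho s') (s' + 1)).
move=> r y rs [x [e [T [er xr T_range ->]]]].
have r0 : 0 <= r by rewrite -er vnorm_ge0.
have rs' : r <= s' by rewrite le_max rs.
have Tc_r : 0 < T < Tc (rho r) (r + 1).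
  by case/andP: T_range => -> /lt_le_trans; apply; rewrite ge_min lexx orbT.
apply: le_trans (F_bounded (rho_ge0 r0) _ _ _ Tc_r) _; rewrite ?er //; try lra.
apply: le_trans (C_Tc_monoM (rho_ge0 r0) (le_rho r0 rs') _).1 _; first lra.
by apply: (C_Tc_monoE (rho_ge0 _) _ _).1; rewrite ?le_max ?lexx ?orbT //; lra.
Qed.

Lemma small_state_output_small eps : 0 < eps ->
  exists2 d, 0 < d & forall r y, r <= d -> small_state_output r y -> y <= eps.
Proof.
move=> eps0; have [delta [delta0 F_delta]] := F_small eps0.
have [d d0 rho_d] := class_K_small rho_K delta0.
exists (Num.min delta d) => [|r y]; first by rewrite lt_min delta0.
rewrite le_min => /andP [r_delta rd] [x [e [T [er xr /andP [T0 T_step]] ->]]].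
have r0 : 0 <= r by rewrite -er vnorm_ge0.
apply/ltW/F_delta; rewrite ?er ?T0 //.
- by rewrite ltW // (lt_le_trans xr) // rho_d // r0.
- by apply: lt_le_trans T_step _; rewrite ge_min lexx.
Qed.

Definition gain := majorant small_state_output.

Let gain_spec := majorant_spec small_state_output_ge0
  small_state_output_bounded small_state_output_small.

Let le_gain : {homo gain : s s' / s <= s'}.
Proof. by case: gain_spec => _ /ltW_homo. Qed.

Let gain_ge0 s : 0 <= s -> 0 <= gain s.
Proof. by case: gain_spec => _ _ g0 _ _ s0; rewrite -g0 le_gain. Qed.

Lemma small_state_step x e T : vnorm x < rho (vnorm e) ->
  0 < T < step_bound (vnorm e) -> vnorm (F x e T) <= gain (vnorm e).
Proof.
case: gain_spec => _ _ _ _ gain_ge xe T_range.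
by apply: gain_ge (lexx _); exists x, e, T.
Qed.

(* Dividing by min K1 K2 rather than K1 makes the overshoot at least 1. *)
Definition overshoot := (K2 / Num.min K1 K2) `^ N^-1.

Definition decay_rate := K3 / (K2 * N).

Let K12_gt0 : 0 < Num.min K1 K2.
Proof. by rewrite lt_min (lt_le_trans ltr01 K1_ge1) (lt_le_trans ltr01 K2_ge1). Qed.

Lemma overshoot_ge1 : 1 <= overshoot.
Proof.
have K2_ge : 1 <= K2 / Num.min K1 K2 by rewrite ler_pdivlMr // mul1r ge_min lexx orbT.
by rewrite -(powRr0 (K2 / Num.min K1 K2)) ler_powR // invr_ge0 (ltW N_gt0).
Qed.

Lemma decay_rate_gt0 : 0 < decay_rate.
Proof. by rewrite divr_gt0 ?mulr_gt0 // (lt_le_trans ltr01). Qed.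

Lemma le_overshoot p w : 0 <= p -> 0 <= w ->
  K1 * p `^ N <= K2 * w `^ N -> p <= overshoot * w.
Proof.
move=> p0 w0 le_pw; apply: powR_le_mul_root => //; first exact: le_trans ler01 K2_ge1.
by apply: le_trans le_pw; rewrite ler_wpM2r ?powR_ge0 // ge_min lexx.
Qed.

Let powN_le p w : 0 <= p -> p <= w -> p `^ N <= w `^ N.
Proof. by move=> p0 pw; rewrite ge0_ler_powR ?nnegrE ?(ltW N_gt0) ?(le_trans p0). Qed.

Section Trajectory.
Variables (M E Tt : R) (V : 'cV[R]_n -> \bar R).
Hypotheses (M_ge0 : 0 <= M) (E_ge0 : 0 <= E) (Tt_gt0 : 0 < Tt).
Hypothesis V_lower : forall x, ((K1 * vnorm x `^ N)%:E <= V x)%E.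
Hypothesis V_upper : forall x, vnorm x <= overshoot * (M + gain E) ->
  (V x <= (K2 * vnorm x `^ N)%:E)%E.
Hypothesis V_decrease : forall (x : 'cV[R]_n) (e : 'cV[R]_q) (T : R),
  rho (vnorm e) <= vnorm x -> vnorm x <= overshoot * (M + gain E) -> vnorm e <= E ->
  0 < T < Tt -> (V (F x e T) <= V x - (T * (K3 * vnorm x `^ N))%:E)%E.

Definition sample_bound := Num.min Tt (Num.min (step_bound E) (K2 / K3)).

Lemma sample_bound_gt0 : 0 < sample_bound.
Proof.
rewrite lt_min Tt_gt0 lt_min step_bound_gt0 //.
by rewrite divr_gt0 // (lt_le_trans ltr01).
Qed.

Let sample_bound_le :
  [/\ sample_bound <= Tt, sample_bound <= step_bound E & sample_bound <= K2 / K3].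
Proof. by split; rewrite ge_min ?lexx //= ge_min lexx /= ?orbT. Qed.

Variables (Ts : nat -> R) (x0 : 'cV[R]_n) (e : nat -> 'cV[R]_q).
Hypotheses (Ts_Phi : in_Phi sample_bound Ts) (x0_le : vnorm x0 <= M).
Hypothesis e_le : forall i, vnorm (e i) <= E.

Let x k := traj F x0 e Ts k.
Let emax k := \big[Num.max/0]_(i < k) vnorm (e i).
Let A k := vnorm x0 * expR (- decay_rate * \sum_(i < k) Ts i).
Let Q k := Num.max (A k) (gain (emax k)).

Let Ts_gt0 k : 0 < Ts k.
Proof. by case/andP: (Ts_Phi k). Qed.

Let Ts_lt k : Ts k < sample_bound.
Proof. by case/andP: (Ts_Phi k). Qed.

Let emax_ge0 k : 0 <= emax k.
Proof. exact: bigmax_ge_id. Qed.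

Let emax_le k : emax k <= E.
Proof. by apply: bigmax_le => // i _; exact: e_le. Qed.

Let A_ge0 k : 0 <= A k.
Proof. by rewrite mulr_ge0 ?vnorm_ge0 ?expR_ge0. Qed.

Let Q_ge0 k : 0 <= Q k.
Proof. by rewrite le_max A_ge0. Qed.

Lemma Q_le k : Q k <= M + gain E.
Proof.
have A_le : A k <= vnorm x0.
  rewrite -[leRHS]mulr1 ler_wpM2l ?vnorm_ge0 // expR_le1 mulNr oppr_le0.
  by rewrite mulr_ge0 ?sumr_ge0 // => [|i _]; [exact/ltW/decay_rate_gt0 | exact/ltW].
rewrite ge_max; apply/andP; split; first by have := gain_ge0 E_ge0; move: x0_le; lra.
by have := le_gain (emax_le k); move: M_ge0; lra.
Qed.

Lemma norm_le_of_V z w : 0 <= w -> (V z <= (K2 * w `^ N)%:E)%E ->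
  vnorm z <= overshoot * w.
Proof.
move=> w0 Vz; apply: le_overshoot; rewrite ?vnorm_ge0 //.
by rewrite -lee_fin (le_trans (V_lower z)).
Qed.

Let emax_step k : emax k <= emax k.+1 /\ vnorm (e k) <= emax k.+1.
Proof.
split; first exact: (le_bigmax_ord xpredT (fun i => vnorm (e i)) (leqnSn k)).
exact: (le_bigmax 0 (fun i : 'I_k.+1 => vnorm (e i)) ord_max).
Qed.

Lemma Q_step k : (1 - Ts k * (K3 / K2)) * Q k `^ N <= Q k.+1 `^ N.
Proof.
have mu_ge0 : 0 <= Ts k * (K3 / K2).
  by rewrite mulr_ge0 ?divr_ge0 ?(ltW (Ts_gt0 k)) // (le_trans ler01).
have [->|->] : Q k = A k \/ Q k = gain (emax k) by rewrite /Q maxEle; case: ifP; auto.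
- have A_step : A k.+1 = A k * expR (- decay_rate * Ts k).
    by rewrite /A big_ord_recr /= mulrDr expRD mulrA.
  apply: le_trans (powN_le (A_ge0 _) (_ : A k.+1 <= Q k.+1)); last by rewrite le_max lexx.
  rewrite A_step powRM ?expR_ge0 // -expRM.
  have -> : - decay_rate * Ts k * N = - (Ts k * (K3 / K2)).
    by rewrite /decay_rate; field; rewrite !gt_eqF // (lt_le_trans ltr01).
  rewrite mulrC ler_wpM2l ?powR_ge0 //.
  by have := expR_ge1Dx (- (Ts k * (K3 / K2))); lra.
- have gQ : gain (emax k) <= Q k.+1 by rewrite le_max (le_gain (emax_step k).1) orbT.
  apply: le_trans (powN_le (gain_ge0 (emax_ge0 k)) gQ).
  by rewrite ler_piMl ?powR_ge0 //; lra.
Qed.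

Lemma V_step_small k : vnorm (x k) < rho (vnorm (e k)) ->
  (V (x k.+1) <= (K2 * Q k.+1 `^ N)%:E)%E.
Proof.
move=> small; have ek0 := vnorm_ge0 (e k).
have step_Q : vnorm (x k.+1) <= Q k.+1.
  apply: le_trans (small_state_step small _) _.
    rewrite Ts_gt0 (lt_le_trans (Ts_lt k)) // (le_trans _ (step_bound_le ek0 (e_le k))) //.
    by case: sample_bound_le.
  by rewrite /Q le_max (le_gain (emax_step k).2) orbT.
have step_M : vnorm (x k.+1) <= overshoot * (M + gain E).
  apply: le_trans step_Q (le_trans (Q_le _) (ler_peMl _ overshoot_ge1)).
  by rewrite addr_ge0 ?gain_ge0.
apply: le_trans (V_upper step_M) _; rewrite lee_fin ler_wpM2l ?powN_le ?vnorm_ge0 //.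
exact: le_trans ler01 K2_ge1.
Qed.

Lemma V_step_decay k : (V (x k) <= (K2 * Q k `^ N)%:E)%E ->
  rho (vnorm (e k)) <= vnorm (x k) -> (V (x k.+1) <= (K2 * Q k.+1 `^ N)%:E)%E.
Proof.
move=> V_Q large; have K2_gt0 : 0 < K2 by apply: lt_le_trans K2_ge1.
have xk_M : vnorm (x k) <= overshoot * (M + gain E).
  apply: le_trans (norm_le_of_V (Q_ge0 k) V_Q) _.
  by rewrite ler_wpM2l ?Q_le // (le_trans ler01 overshoot_ge1).
have T_Tt : 0 < Ts k < Tt.
  by rewrite Ts_gt0 (lt_le_trans (Ts_lt k)) //; case: sample_bound_le.
have /fineK Vk : V (x k) \is a fin_num.
  rewrite ge0_fin_numE ?(le_lt_trans V_Q) ?ltry //.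
  by rewrite (le_trans _ (V_lower _)) // lee_fin mulr_ge0 ?powR_ge0 // (le_trans ler01).
move: V_Q (V_upper xk_M) (V_decrease large xk_M (e_le k) T_Tt).
rewrite -Vk -EFinB !lee_fin => V_Q V_up V_dec.
apply: le_trans V_dec _; rewrite lee_fin.
have mu_le1 : Ts k * (K3 / K2) <= 1.
  have K3_gt0 : 0 < K3 by apply: lt_le_trans K3_ge1.
  case: sample_bound_le => _ _ /(lt_le_trans (Ts_lt k)) /ltW.
  rewrite -(ler_pM2r (_ : 0 < K3 / K2)) ?divr_gt0 // mulf_div (mulrC K3 K2).
  by rewrite divff // mulf_neq0 ?gt_eqF.
apply: (@le_trans _ _ ((1 - Ts k * (K3 / K2)) * fine (V (x k)))).
  rewrite mulrBl mul1r lerD2l lerN2 -mulrA ler_wpM2l ?(ltW (Ts_gt0 k)) //.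
  rewrite -mulrA ler_wpM2l ?(le_trans ler01 K3_ge1) //.
  by rewrite mulrC ler_pdivrMr // mulrC.
have mu_ge0 : 0 <= 1 - Ts k * (K3 / K2) by rewrite subr_ge0.
apply: le_trans (ler_wpM2l mu_ge0 V_Q) _.
by rewrite mulrCA ler_wpM2l ?Q_step ?ltW.
Qed.

Lemma V_traj_le k : (V (x k) <= (K2 * Q k `^ N)%:E)%E.
Proof.
elim: k => [|k IH].
  have x0_M : vnorm x0 <= overshoot * (M + gain E).
    apply: le_trans x0_le (le_trans _ (ler_peMl _ overshoot_ge1)).
      by rewrite lerDl gain_ge0.
    by rewrite addr_ge0 ?gain_ge0.
  apply: le_trans (V_upper x0_M) _; rewrite lee_fin ler_wpM2l ?(le_trans ler01) //.
  by rewrite powN_le ?vnorm_ge0 // /Q /A big_ord0 mulr0 expR0 mulr1 le_max lexx.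
have [small|large] := ltP (vnorm (x k)) (rho (vnorm (e k))).
- exact: V_step_small.
- exact: V_step_decay.
Qed.

Lemma traj_bound k : vnorm (traj F x0 e Ts k) <=
  overshoot * vnorm x0 * expR (- decay_rate * \sum_(i < k) Ts i)
  + overshoot * gain (\big[Num.max/0]_(i < k) vnorm (e i)).
Proof.
apply: le_trans (norm_le_of_V (Q_ge0 k) (V_traj_le k)) _.
rewrite -mulrA -mulrDr ler_wpM2l ?(le_trans ler01 overshoot_ge1) // /Q /emax ge_max.
by rewrite lerDl gain_ge0 ?emax_ge0 // lerDr A_ge0.
Qed.

End Trajectory.

Definition Lyapunov_family := forall M E : R, 0 <= M -> 0 <= E ->
  exists (Tt : R) (V : 'cV[R]_n -> \bar R),
    0 < Tt /\
    (forall x, (0 <= V x)%E) /\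
    (forall x, ((K1 * vnorm x `^ N)%:E <= V x)%E) /\
    (forall x, vnorm x <= M -> (V x <= (K2 * vnorm x `^ N)%:E)%E) /\
    (forall (x : 'cV[R]_n) (e : 'cV[R]_q) (T : R),
       rho (vnorm e) <= vnorm x -> vnorm x <= M -> vnorm e <= E -> 0 < T < Tt ->
       (V (F x e T) <= V x - (T * (K3 * vnorm x `^ N))%:E)%E).

Theorem SE_ISS_VSR_of_Lyapunov : Lyapunov_family -> SE_ISS_VSR F.
Proof.
move=> V_family; have overshoot_gt0 := lt_le_trans ltr01 overshoot_ge1.
exists overshoot, decay_rate, (fun s => overshoot * gain s).
split; first exact: overshoot_ge1.
split; first exact: decay_rate_gt0.
split.
  have [g_cont g_incr g0 g_ge _] := gain_spec.
  exact: class_Kinf_scale overshoot_gt0 g_cont g_incr g0 g_ge.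
move=> M E M_ge0 E_ge0.
have Mbar_ge0 : 0 <= overshoot * (M + gain E).
  by apply: mulr_ge0; [exact: ltW | rewrite addr_ge0 ?gain_ge0].
have [Tt [V [Tt_gt0 [_ [V_lower [V_upper V_decrease]]]]]] := V_family _ _ Mbar_ge0 E_ge0.
exists (sample_bound E Tt); split; first exact: sample_bound_gt0.
move=> k Ts x0 e Ts_Phi x0_le e_le.
exact (traj_bound M_ge0 E_ge0 V_lower V_upper V_decrease Ts_Phi x0_le e_le k).
Qed.

End Stability.

Theorem theorem2 (R : realType) (n q : nat)
  (F : 'cV[R]_n -> 'cV[R]_q -> R -> 'cV[R]_n) :
  (* (i) *)
  (exists T0 : R, 0 < T0 /\ forall T : R, 0 < T < T0 -> F 0 0 T = 0) ->
  (* (ii) *)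
  (exists Th : R, 0 < Th /\ forall eps : R, 0 < eps ->
     exists delta : R, 0 < delta /\
       forall (x : 'cV[R]_n) (e : 'cV[R]_q) (T : R),
         vnorm x <= delta -> vnorm e <= delta -> 0 < T < Th ->
         vnorm (F x e T) < eps) ->
  (* (iii) *)
  (exists C Tc : R -> R -> R,
     (forall M E : R, 0 <= M -> 0 <= E -> 0 < C M E /\ 0 < Tc M E) /\
     (forall M M' E : R, 0 <= M -> M <= M' -> 0 <= E ->
        C M E <= C M' E /\ Tc M' E <= Tc M E) /\
     (forall M E E' : R, 0 <= M -> 0 <= E -> E <= E' ->
        C M E <= C M E' /\ Tc M E' <= Tc M E) /\
     (forall M E : R, 0 <= M -> 0 <= E ->
        forall (x : 'cV[R]_n) (e : 'cV[R]_q) (T : R),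
          vnorm x < M -> vnorm e < E -> 0 < T < Tc M E ->
          vnorm (F x e T) <= C M E)) ->
  (* (iv) *)
  (exists (N K1 K2 K3 : R) (rho : R -> R),
     0 < N /\ 1 <= K1 /\ 1 <= K2 /\ 1 <= K3 /\ class_K rho /\
     forall M E : R, 0 <= M -> 0 <= E ->
       exists (Tt : R) (V : 'cV[R]_n -> \bar R),
         0 < Tt /\
         (forall x, (0 <= V x)%E) /\
         (forall x, ((K1 * vnorm x `^ N)%:E <= V x)%E) /\
         (forall x, vnorm x <= M -> (V x <= (K2 * vnorm x `^ N)%:E)%E) /\
         (forall (x : 'cV[R]_n) (e : 'cV[R]_q) (T : R),
            rho (vnorm e) <= vnorm x -> vnorm x <= M -> vnorm e <= E ->
            0 < T < Tt ->
            (V (F x e T) <= V x - (T * (K3 * vnorm x `^ N))%:E)%E)) ->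
  SE_ISS_VSR F.
Proof.
move=> _ [Th [Th_gt0 F_small]] [C [Tc [C_Tc_gt0 [C_Tc_monoM [C_Tc_monoE F_bounded]]]]].
move=> [N [K1 [K2 [K3 [rho [N_gt0 [K1_ge1 [K2_ge1 [K3_ge1 [rho_K V_family]]]]]]]]]].
exact: (SE_ISS_VSR_of_Lyapunov Th_gt0 F_small C_Tc_gt0 C_Tc_monoM C_Tc_monoE
  F_bounded N_gt0 K1_ge1 K2_ge1 K3_ge1 rho_K V_family).
Qed.
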